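(* Let $D$ be a connected locally semicomplete digraph in which no inclusion-wise maximal weak hub is mixed, and let $X,Y$ be two distinct inclusion-wise maximal weak hubs. Then exactly one of the following holds: there is no arc between $X$ and $Y$; or for all $x\in X,y\in Y$, $xy$ is an arc and $yx$ is not; or for all $x\in X,y\in Y$, $yx$ is an arc and $xy$ is not.
   Context: Digraphs are finite, no loops, no parallel arcs; digons allowed. $x^+$, $x^-$ are out- and in-neighbourhoods. Semicomplete: any two distinct vertices are joined by at least one arc; locally semicomplete: every $x^+$ and every $x^-$ induces a semicomplete digraph. A weak hub is a set $X\subseteq V(D)$ with $D[X]$ strongly connected such that some vertex $x$ satisfies $X\subseteq x^-\setminus x^+$ or $X\subseteq x^+\setminus x^-$. A weak hub $X$ is mixed if there exist $x\notin X$ and $u,v\in X$ such that $xu$ and $vx$ are arcs. *)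

From mathcomp Require Import all_boot.
Set Implicit Arguments. Unset Strict Implicit. Unset Printing Implicit Defensive.

(* no loops (parallel arcs are impossible with a relation; digons allowed) *)
Definition loopless (V : finType) (arc : rel V) : Prop := forall v, ~~ arc v v.

Definition outN (V : finType) (arc : rel V) (x : V) : {set V} := [set y | arc x y].
Definition inN (V : finType) (arc : rel V) (x : V) : {set V} := [set y | arc y x].

Definition semicomplete_on (V : finType) (arc : rel V) (S : {set V}) : Prop :=
  forall u v, u \in S -> v \in S -> u != v -> arc u v || arc v u.

Definition locally_semicomplete (V : finType) (arc : rel V) : Prop :=
  forall x, semicomplete_on arc (outN arc x) /\ semicomplete_on arc (inN arc x).

(* connected = weakly connected: the underlying undirected graph is connected *)
Definition dconnected (V : finType) (arc : rel V) : Prop :=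
  forall u v, connect [rel a b | arc a b || arc b a] u v.

Definition strong_on (V : finType) (arc : rel V) (X : {set V}) : Prop :=
  X != set0 /\
  forall u v, u \in X -> v \in X ->
    connect [rel a b | [&& a \in X, b \in X & arc a b]] u v.

Definition weak_hub (V : finType) (arc : rel V) (X : {set V}) : Prop :=
  strong_on arc X /\
  exists x, X \subset inN arc x :\: outN arc x \/ X \subset outN arc x :\: inN arc x.

Definition max_weak_hub (V : finType) (arc : rel V) (X : {set V}) : Prop :=
  weak_hub arc X /\ forall Z, weak_hub arc Z -> X \subset Z -> Z = X.

Definition mixed (V : finType) (arc : rel V) (X : {set V}) : Prop :=
  exists x u v, [/\ x \notin X, u \in X, v \in X, arc x u & arc v x].

Definition exactly_one3 (A B C : Prop) : Prop :=
  [/\ A, ~ B & ~ C] \/ [/\ ~ A, B & ~ C] \/ [/\ ~ A, ~ B & C].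

(* The key fact is absorption: if Y is strongly connected and not mixed, and a
   vertex a outside Y receives an arc from Y, then every vertex of Y sends an
   arc to a and receives none ("a is a sink for Y"); local semicompleteness
   propagates the arc along the paths of D[Y].  Dually, if a sends an arc into
   Y then a is a source for Y.  All dual statements are obtained by passing to
   the converse digraph, which preserves local semicompleteness, strong
   connectivity and (non-)mixedness, and exchanges sinks and sources.

   From absorption we get: (1) two distinct maximal weak hubs are disjoint,
   since otherwise the centre of one is a centre for their union, contradicting
   maximality; (2) for disjoint non-mixed strong sets X and Y, a single arc from
   X to Y forces X to dominate Y.  The theorem follows by a case analysis on the
   arcs between X and Y; the three alternatives exclude each other because X
   and Y are nonempty. *)
From mathcomp Require Import all_boot.
Set Implicit Arguments. Unset Strict Implicit. Unset Printing Implicit Defensive.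

Lemma connect_exit (T : finType) (e : rel T) (P : pred T) x y :
  connect e x y -> P x -> ~~ P y -> exists u w, [/\ P u, ~~ P w & e u w].
Proof.
move=> /connectP[p]; elim: p x => [|z p IH] x /=; first by move=> _ -> ->.
move=> /andP[exz pz] ey Px; case Pz: (P z).
- exact: IH pz ey Pz.
- by exists x, z; rewrite Pz.
Qed.

Definition conv (V : finType) (arc : rel V) : rel V := [rel u v | arc v u].

(* a is a sink for X: every vertex of X sends an arc to a and receives none.
   A weak hub is a strong set with a sink in D or in the converse of D. *)
Definition sink_of (V : finType) (arc : rel V) (a : V) (X : {set V}) : bool :=
  X \subset inN arc a :\: outN arc a.

Definition arc_free (V : finType) (arc : rel V) (A B : {set V}) : Prop :=
  forall x y, x \in A -> y \in B -> ~~ arc x y && ~~ arc y x.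

Definition dominates (V : finType) (arc : rel V) (A B : {set V}) : Prop :=
  forall x y, x \in A -> y \in B -> arc x y && ~~ arc y x.

Section Converse.
Variables (V : finType) (arc : rel V).

Lemma outN_conv (x : V) : outN (conv arc) x = inN arc x.
Proof. by apply/setP=> y; rewrite !inE. Qed.

Lemma inN_conv (x : V) : inN (conv arc) x = outN arc x.
Proof. by apply/setP=> y; rewrite !inE. Qed.

Lemma sink_of_conv (a : V) (X : {set V}) :
  sink_of (conv arc) a X = (X \subset outN arc a :\: inN arc a).
Proof. by rewrite /sink_of inN_conv outN_conv. Qed.

Lemma sink_ofP (a : V) (X : {set V}) :
  reflect (forall x, x \in X -> arc x a && ~~ arc a x) (sink_of arc a X).
Proof.
by apply: (iffP subsetP) => h x /h; rewrite !inE andbC.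
Qed.

Lemma semicomplete_on_conv (S : {set V}) :
  semicomplete_on arc S -> semicomplete_on (conv arc) S.
Proof. by move=> h u v uS vS uv; rewrite /= orbC; apply: h. Qed.

Lemma lsc_conv : locally_semicomplete arc -> locally_semicomplete (conv arc).
Proof.
move=> lsc x; rewrite outN_conv inN_conv.
by split; apply: semicomplete_on_conv; case: (lsc x).
Qed.

Lemma strong_on_conv (Y : {set V}) : strong_on arc Y -> strong_on (conv arc) Y.
Proof.
move=> [nY sY]; split=> // u v uY vY.
set e := [rel a b | [&& a \in Y, b \in Y & arc a b]].
rewrite (@eq_connect _ _ [rel x y | e y x]) ?connect_rev; first exact: sY.
by move=> x y /=; rewrite andbCA.
Qed.

Lemma not_mixed_conv (Y : {set V}) : ~ mixed arc Y -> ~ mixed (conv arc) Y.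
Proof. by move=> nmY [x [u [v [xY uY vY xu vx]]]]; apply: nmY; exists x, v, u. Qed.

End Converse.

Section Absorption.
Variables (V : finType) (arc : rel V).
Hypothesis lsc : locally_semicomplete arc.

Lemma absorb_sink (Y : {set V}) (a v : V) :
  strong_on arc Y -> ~ mixed arc Y -> a \notin Y -> v \in Y -> arc v a ->
  sink_of arc a Y.
Proof.
move=> [_ sY] nmY aY vY va; apply/sink_ofP=> y yY.
have no_back z : z \in Y -> ~~ arc a z.
  by move=> zY; apply/negP=> az; apply: nmY; exists a, z, v.
rewrite no_back // andbT.
have /connectP[p] := sY v y vY yY.
elim: p v vY va => [|z p IH] w wY wa /=; first by move=> _ ->.
move=> /andP[/and3P[_ zY wz] pz] ey; apply: IH pz ey => //.
have az : a != z by apply: contraNneq aY => ->.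
have := (lsc w).1 a z; rewrite !inE => /(_ wa wz az) /orP[az'|//].
by move: (no_back z zY); rewrite az'.
Qed.

(* A sink of a strong set X lies outside any non-mixed set Y that meets X
   without containing it: otherwise a path of D[X] leaving Y would witness
   that Y is mixed. *)
Lemma sink_notin (Y X : {set V}) (a v x : V) :
  strong_on arc X -> sink_of arc a X -> ~ mixed arc Y ->
  v \in X -> v \in Y -> x \in X -> x \notin Y -> a \notin Y.
Proof.
move=> [_ sX] /sink_ofP sinkX nmY vX vY xX xY; apply/negP=> aY.
have [u [w [uY wY /and3P[_ wX uw]]]] :=
  connect_exit (P := mem Y) (sX v x vX xX) vY xY.
have /andP[wa _] := sinkX w wX.
by apply: nmY; exists w, a, u.
Qed.

Lemma sink_of_setU (X Y : {set V}) (a v : V) :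
  strong_on arc X -> sink_of arc a X -> strong_on arc Y -> ~ mixed arc Y ->
  v \in X -> v \in Y -> ~~ (X \subset Y) -> sink_of arc a (X :|: Y).
Proof.
move=> sX sinkX sY nmY vX vY /subsetPn[x xX xY].
have aY := sink_notin sX sinkX nmY vX vY xX xY.
have /sink_ofP/(_ v vX)/andP[va _] := sinkX.
rewrite /sink_of subUset; apply/andP; split=> //.
exact: absorb_sink sY nmY aY vY va.
Qed.

End Absorption.

Lemma absorb_source (V : finType) (arc : rel V) (Y : {set V}) (a v : V) :
  locally_semicomplete arc -> strong_on arc Y -> ~ mixed arc Y ->
  a \notin Y -> v \in Y -> arc a v -> sink_of (conv arc) a Y.
Proof.
move=> lsc sY nmY.
exact (absorb_sink (lsc_conv lsc) (strong_on_conv sY) (not_mixed_conv nmY)).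
Qed.

Lemma strong_on_setU (V : finType) (arc : rel V) (X Y : {set V}) (v : V) :
  strong_on arc X -> strong_on arc Y -> v \in X -> v \in Y ->
  strong_on arc (X :|: Y).
Proof.
move=> [_ sX] [_ sY] vX vY; split; first by apply/set0Pn; exists v; rewrite inE vX.
set e := [rel a b | [&& a \in X :|: Y, b \in X :|: Y & arc a b]].
have lift (Z : {set V}) u w : Z \subset X :|: Y ->
    connect [rel a b | [&& a \in Z, b \in Z & arc a b]] u w -> connect e u w.
  move=> sZ; apply: connect_sub => x y /and3P[xZ yZ xy].
  by apply: connect1; rewrite /= xy (subsetP sZ x xZ) (subsetP sZ y yZ).
have cX u w : u \in X -> w \in X -> connect e u w.
  by move=> uX wX; apply: lift (subsetUl X Y) (sX u w uX wX).
have cY u w : u \in Y -> w \in Y -> connect e u w.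
  by move=> uY wY; apply: lift (subsetUr X Y) (sY u w uY wY).
move=> u w; rewrite !inE => /orP[uX|uY] /orP[wX|wY].
- exact: cX.
- exact: connect_trans (cX _ _ uX vX) (cY _ _ vY wY).
- exact: connect_trans (cY _ _ uY vY) (cX _ _ vX wX).
- exact: cY.
Qed.

Lemma max_weak_hubs_disjoint (V : finType) (arc : rel V) (X Y : {set V}) :
  locally_semicomplete arc -> max_weak_hub arc X -> max_weak_hub arc Y ->
  ~ mixed arc Y -> X != Y -> [disjoint X & Y].
Proof.
move=> lsc [hX maxX] [hY maxY] nmY neqXY.
have [sX [a centre]] := hX; have sY := hY.1.
rewrite disjoints_subset; apply/subsetP=> v vX; rewrite inE; apply/negP=> vY.
have nXY : ~~ (X \subset Y).
  by apply/negP=> /(maxX Y hY) eqYX; rewrite eqYX eqxx in neqXY.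
have hubU : weak_hub arc (X :|: Y).
  split; first exact: strong_on_setU sX sY vX vY.
  exists a; rewrite -!sink_of_conv in centre *.
  case: centre => [sinkX|srcX]; [left|right].
  - exact (sink_of_setU lsc sX sinkX sY nmY vX vY nXY).
  - exact (sink_of_setU (lsc_conv lsc) (strong_on_conv sX) srcX
             (strong_on_conv sY) (not_mixed_conv nmY) vX vY nXY).
have /setUidPl YsubX := maxX _ hubU (subsetUl X Y).
by rewrite (maxY X hX YsubX) eqxx in neqXY.
Qed.

(* For disjoint strong non-mixed sets X and Y, one arc from X to Y makes X
   dominate Y: its head absorbs X, and then every vertex of X absorbs Y. *)
Lemma arc_dominates (V : finType) (arc : rel V) (X Y : {set V}) (x1 y1 : V) :
  locally_semicomplete arc -> strong_on arc X -> ~ mixed arc X ->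
  strong_on arc Y -> ~ mixed arc Y -> [disjoint X & Y] ->
  x1 \in X -> y1 \in Y -> arc x1 y1 -> dominates arc X Y.
Proof.
move=> lsc sX nmX sY nmY disjXY x1X y1Y xy1 x y xX yY.
have y1X : y1 \notin X by rewrite (disjointFl disjXY y1Y).
have xY : x \notin Y by rewrite (disjointFr disjXY xX).
have /sink_ofP/(_ x xX)/andP[xy1' _] := absorb_sink lsc sX nmX y1X x1X xy1.
by have /sink_ofP/(_ y yY) := absorb_source lsc sY nmY xY y1Y xy1'.
Qed.

Lemma arcs_trichotomy (V : finType) (arc : rel V) (X Y : {set V}) :
  locally_semicomplete arc -> strong_on arc X -> ~ mixed arc X ->
  strong_on arc Y -> ~ mixed arc Y -> [disjoint X & Y] ->
  [\/ arc_free arc X Y, dominates arc X Y | dominates (conv arc) X Y].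
Proof.
move=> lsc sX nmX sY nmY disjXY.
case: (boolP [exists x in X, exists y in Y, arc x y]).
  move=> /exists_inP[x1 x1X /exists_inP[y1 y1Y xy1]]; apply: Or32.
  exact: arc_dominates lsc sX nmX sY nmY disjXY x1X y1Y xy1.
case: (boolP [exists x in X, exists y in Y, arc y x]).
  move=> /exists_inP[x1 x1X /exists_inP[y1 y1Y yx1]] _; apply: Or33.
  exact: arc_dominates (lsc_conv lsc) (strong_on_conv sX) (not_mixed_conv nmX)
    (strong_on_conv sY) (not_mixed_conv nmY) disjXY x1X y1Y yx1.
move=> noYX noXY; apply: Or31 => x y xX yY.
apply/andP; split; apply/negP=> e; [move/negP: noXY | move/negP: noYX];
  by apply; apply/exists_inP; exists x => //; apply/exists_inP; exists y.
Qed.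

(* When X and Y are nonempty, the three alternatives exclude each other: each
   prescribes a different pattern of arcs between a fixed x0 in X and y0 in Y. *)
Lemma exactly_one3_arcs (V : finType) (arc : rel V) (X Y : {set V}) :
  X != set0 -> Y != set0 ->
  [\/ arc_free arc X Y, dominates arc X Y | dominates (conv arc) X Y] ->
  exactly_one3 (arc_free arc X Y) (dominates arc X Y) (dominates (conv arc) X Y).
Proof.
move=> /set0Pn[x0 x0X] /set0Pn[y0 y0Y].
rewrite /exactly_one3 /arc_free /dominates /conv /=.
case=> h; [left | right; left | right; right]; split=> // h';
  move: (h x0 y0 x0X y0Y) (h' x0 y0 x0X y0Y);
  by case: (arc x0 y0); case: (arc y0 x0).
Qed.

(* The three alternatives are arc_free, dominates and dominates in the
   converse digraph. *)
Theorem claim4p6 (V : finType) (arc : rel V) (X Y : {set V}) :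
  loopless arc ->
  dconnected arc ->
  locally_semicomplete arc ->
  (forall Z : {set V}, max_weak_hub arc Z -> ~ mixed arc Z) ->
  max_weak_hub arc X -> max_weak_hub arc Y -> X != Y ->
  exactly_one3
    (forall x y, x \in X -> y \in Y -> ~~ arc x y && ~~ arc y x)
    (forall x y, x \in X -> y \in Y -> arc x y && ~~ arc y x)
    (forall x y, x \in X -> y \in Y -> arc y x && ~~ arc x y).
Proof.
move=> _ _ lsc nomix mX mY neqXY.
have [[sX _] _] := mX; have [[sY _] _] := mY.
have disjXY := max_weak_hubs_disjoint lsc mX mY (nomix Y mY) neqXY.
apply: (exactly_one3_arcs sX.1 sY.1).
exact: arcs_trichotomy lsc sX (nomix X mX) sY (nomix Y mY) disjXY.
Qed.
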